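(* Let $v$ be an equilibrium in the interior of $\Delta$ (all coordinates positive) which is different from the center $(1/N,\dots,1/N)$. Then the set $\{v_i: i\le N\}$ has exactly two elements.
   Context: Let $N\ge3$, $\alpha>1$, and $A_{i,j}=1-\delta_{i,j}$ for $i,j\le N$. Let $\Delta=\{v\in\mathbb R_+^N:\sum_iv_i=1,\ v_i\le3/4\ \forall i\}$. For $v\in\Delta$ let $v^\alpha=(v_i^\alpha)_i$, $H(v)=\sum_{i\neq j}v_i^\alpha v_j^\alpha$, $\pi_i(v)=v_i^\alpha(Av^\alpha)_i/H(v)$, and $F(v)=-v+\pi(v)$. An equilibrium is $v\in\Delta$ with $F(v)=0$. *)

From mathcomp Require Import all_boot all_order all_algebra.
From mathcomp Require Import all_classical all_reals all_analysis.
Set Implicit Arguments. Unset Strict Implicit. Unset Printing Implicit Defensive.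
Import Order.TTheory GRing.Theory Num.Theory.
Local Open Scope ring_scope.

Section Defs.
Variables (R : realType) (N : nat) (alpha : R).

Definition Amat : 'M[R]_N := \matrix_(i, j) (1 - (i == j)%:R).

Definition inDelta (v : 'I_N -> R) : Prop :=
  (\sum_i v i = 1) /\ (forall i, 0 <= v i /\ v i <= 3 / 4).

Definition vpow (v : 'I_N -> R) (i : 'I_N) : R := v i `^ alpha.

Definition Avpow (v : 'I_N -> R) (i : 'I_N) : R :=
  \sum_j Amat i j * vpow v j.

Definition Hfun (v : 'I_N -> R) : R :=
  \sum_i \sum_(j | j != i) vpow v i * vpow v j.

Definition pifun (v : 'I_N -> R) (i : 'I_N) : R :=
  vpow v i * Avpow v i / Hfun v.

Definition Ffun (v : 'I_N -> R) (i : 'I_N) : R := - v i + pifun v i.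

Definition equilibrium (v : 'I_N -> R) : Prop :=
  inDelta v /\ (forall i, Ffun v i = 0).

Definition simplex_center : 'I_N -> R := fun _ => 1 / N%:R.

End Defs.
Arguments simplex_center {R N} _.

From mathcomp Require Import all_boot all_order all_algebra.
From mathcomp Require Import all_classical all_reals all_analysis.
From mathcomp Require Import ring.
Set Implicit Arguments.
Unset Strict Implicit.
Unset Printing Implicit Defensive.

Import Order.TTheory GRing.Theory Num.Theory.
Local Open Scope ring_scope.

(* At an interior equilibrium, v_i = v_i^a (S - v_i^a) / H with S = sum_j v_j^a,
   i.e. every coordinate solves psi(x) := x^a + H x^(1-a) = S.  For a > 1 and
   H > 0 the derivative of psi is strictly increasing on (0, oo), so by Rolle
   psi takes no value three times: the coordinates take at most two values, and
   one value is excluded because the only constant point of the simplex is its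
   center. *)

Lemma uniq_size_le2 (d : Order.disp_t) (T : orderType d) (s : seq T) :
  uniq s ->
  (forall x y z, x \in s -> y \in s -> z \in s -> (x < y < z)%O -> False) ->
  (size s <= 2)%N.
Proof.
move=> us no3; rewrite -(size_sort <=%O); have := sort_lt_sorted s.
rewrite us; case: (sort _ s) (mem_sort <=%O s) => [|x [|y [|z t]]] //= mem.
case/and3P=> xy yz _; exfalso.
by apply: (no3 x y z); rewrite ?xy ?yz // -mem !inE eqxx ?orbT.
Qed.

Section LevelCurve.
Variables (R : realType) (a H : R).
Hypotheses (a_gt1 : 1 < a) (H_gt0 : 0 < H).

Definition psi (x : R) : R := x `^ a + H * x `^ (1 - a).

Definition dpsi (x : R) : R := a * x `^ (a - 1) + H * ((1 - a) * x `^ (1 - a - 1)).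

Lemma is_derive_psi (x : R) : 0 < x -> is_derive x 1 psi (dpsi x).
Proof.
move=> x_gt0.
exact: is_deriveD (is_derive1_powR a x_gt0) (is_deriveZ H (is_derive1_powR (1 - a) x_gt0)).
Qed.

Lemma dpsi_lt (x y : R) : 0 < x -> x < y -> dpsi x < dpsi y.
Proof.
move=> x_gt0 xy; have y_gt0 := lt_trans x_gt0 xy.
rewrite /dpsi (_ : 1 - a - 1 = - a); last by ring.
rewrite !powRN -subr_gt0.
have lt_pow1 : x `^ (a - 1) < y `^ (a - 1).
  by apply: gt0_ltr_powR; rewrite ?subr_gt0 // nnegrE ltW.
have lt_powV : (y `^ a)^-1 < (x `^ a)^-1.
  rewrite ltf_pV2 ?posrE ?powR_gt0 //.
  by apply: gt0_ltr_powR; rewrite ?(lt_trans _ a_gt1) // nnegrE ltW.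
set r1 := x `^ (a - 1) in lt_pow1 *; set r2 := y `^ (a - 1) in lt_pow1 *.
set q1 := (x `^ a)^-1 in lt_powV *; set q2 := (y `^ a)^-1 in lt_powV *.
have -> : a * r2 + H * ((1 - a) * q2) - (a * r1 + H * ((1 - a) * q1))
   = a * (r2 - r1) + H * ((a - 1) * (q1 - q2)) by ring.
have a_gt0 : 0 < a by apply: lt_trans a_gt1.
by rewrite addr_gt0 ?mulr_gt0 ?subr_gt0.
Qed.

Lemma psi_rolle (x y : R) : 0 < x -> x < y -> psi x = psi y ->
  exists2 c, c \in `]x, y[ & dpsi c = 0.
Proof.
move=> x_gt0 xy psi_xy.
have der c : c \in `]x, y[ -> is_derive c 1 psi (dpsi c).
  by rewrite in_itv /= => /andP[xc _]; apply/is_derive_psi/(lt_trans x_gt0).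
have [|c cxy] := MVT xy der.
  apply: derivable_within_continuous => c; rewrite in_itv /= => /andP[xc _].
  by case: (is_derive_psi (lt_le_trans x_gt0 xc)).
rewrite psi_xy subrr => /esym/eqP; rewrite mulf_eq0 subr_eq0 (gt_eqF xy) orbF.
by exists c => //; apply/eqP.
Qed.

Lemma psi_not_thrice (x y z : R) : 0 < x -> x < y -> y < z ->
  psi x = psi y -> psi y = psi z -> False.
Proof.
move=> x_gt0 xy yz psi_xy psi_yz.
have [c1] := psi_rolle x_gt0 xy psi_xy; rewrite in_itv /= => /andP[xc1 c1y] dc1.
have [c2] := psi_rolle (lt_trans x_gt0 xy) yz psi_yz.
rewrite in_itv /= => /andP[yc2 _] dc2.
have := dpsi_lt (lt_trans x_gt0 xc1) (lt_trans c1y yc2).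
by rewrite dc1 dc2 ltxx.
Qed.

Lemma psi_level_size_le2 (S : R) (s : seq R) : uniq s ->
  (forall x, x \in s -> 0 < x /\ psi x = S) -> (size s <= 2)%N.
Proof.
move=> us level; apply: uniq_size_le2 us _ => x y z.
move=> /level[x_gt0 psi_x] /level[_ psi_y] /level[_ psi_z] /andP[xy yz].
by apply: (psi_not_thrice x_gt0 xy yz); rewrite ?psi_x ?psi_y ?psi_z.
Qed.

End LevelCurve.

Section Equilibrium.
Variables (R : realType) (N : nat) (alpha : R).

Lemma Avpow_sumE (v : 'I_N -> R) (i : 'I_N) :
  Avpow alpha v i = \sum_j vpow alpha v j - vpow alpha v i.
Proof.
rewrite /Avpow; under eq_bigr => j _ do rewrite mxE mulrBl mul1r.
rewrite sumrB; congr (_ - _); rewrite (bigD1 i) //= eqxx mul1r big1 ?addr0 // => j.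
by rewrite eq_sym => /negbTE ->; rewrite mul0r.
Qed.

Lemma Avpow_ge0 (v : 'I_N -> R) (i : 'I_N) : 0 <= Avpow alpha v i.
Proof.
apply: sumr_ge0 => j _; rewrite mxE mulr_ge0 ?powR_ge0 //.
by case: (i == j); rewrite /= ?subrr ?subr0.
Qed.

Lemma equilibrium_coordE (v : 'I_N -> R) (i : 'I_N) : equilibrium alpha v ->
  v i = vpow alpha v i * Avpow alpha v i / Hfun alpha v.
Proof.
by case=> _ /(_ i)/eqP; rewrite /Ffun /pifun addrC subr_eq0 => /eqP.
Qed.

Hypotheses (v : 'I_N -> R) (eq_v : equilibrium alpha v) (v_gt0 : forall i, 0 < v i).

Lemma equilibrium_Hfun_gt0 (i : 'I_N) : 0 < Hfun alpha v.
Proof.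
rewrite ltNge; apply/negP => H_le0.
have := v_gt0 i; rewrite (equilibrium_coordE i eq_v) ltNge => /negP; apply.
by rewrite mulr_ge0_le0 ?invr_le0 // mulr_ge0 ?powR_ge0 ?Avpow_ge0.
Qed.

Lemma equilibrium_psiE (i : 'I_N) :
  psi alpha (Hfun alpha v) (v i) = \sum_j vpow alpha v j.
Proof.
have vi_gt0 := v_gt0 i; have H_gt0 := equilibrium_Hfun_gt0 i.
have := equilibrium_coordE i eq_v; rewrite Avpow_sumE /psi /vpow.
have P_gt0 : 0 < v i `^ alpha by apply: powR_gt0.
set P := v i `^ alpha in P_gt0 *; set S := \sum_j _; move=> vi_eq.
rewrite powRB ?(gt_eqF vi_gt0) ?implybT // powRr1 ?ltW // -/P.
suff -> : Hfun alpha v * (v i / P) = S - P by ring.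
by rewrite vi_eq; field; rewrite !gt_eqF.
Qed.

End Equilibrium.

Lemma const_sum1_center (R : realType) (N : nat) (v : 'I_N -> R) (x : R) :
  (forall i, v i = x) -> \sum_i v i = 1 -> v = simplex_center.
Proof.
move=> vx; under eq_bigr => i _ do rewrite vx.
rewrite sumr_const card_ord -mulr_natl => Nx; apply: funext => i.
have N_neq0 : (N%:R : R) != 0.
  by apply/eqP => N0; move: Nx; rewrite N0 mul0r => /eqP; rewrite eq_sym oner_eq0.
by rewrite vx /simplex_center -[X in X / _]Nx mulrC mulKf.
Qed.

Theorem lemma4p3 (R : realType) (N : nat) (alpha : R) (v : 'I_N -> R) :
  (3 <= N)%N -> 1 < alpha ->
  equilibrium alpha v ->
  (forall i, 0 < v i) ->
  v <> simplex_center ->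
  size (undup [seq v i | i <- enum 'I_N]) = 2%N.
Proof.
move=> N_ge3 alpha_gt1 eq_v v_gt0 v_ncenter.
pose i0 : 'I_N := Ordinal (ltn_trans (isT : (0 < 2)%N) N_ge3).
set s := undup _.
have mem_s i : v i \in s by rewrite mem_undup map_f ?mem_enum.
have size_le2 : (size s <= 2)%N.
  apply: (psi_level_size_le2 alpha_gt1 (equilibrium_Hfun_gt0 eq_v v_gt0 i0)
            (undup_uniq _)) => x.
  by rewrite mem_undup => /mapP[i _ ->]; rewrite equilibrium_psiE.
case: s mem_s size_le2 => [|x [|y [|z t]]] // mem_s _.
- by have := mem_s i0.
- case: v_ncenter; case: eq_v => -[sum_v _] _.
  by apply: (const_sum1_center (x := x)) => // i; apply/eqP; rewrite -mem_seq1 mem_s.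
Qed.
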